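(* Let $C\subset\mathbb{R}^d$ be a nonempty closed convex set, let $f(x)=\mathbb{E}_\xi[f(x,\xi)]$ where each $f(\cdot,\xi)$ is convex and $G$-Lipschitz, and let $x_*\in\arg\min_{x\in C}f(x)$. Let $\xi_0,\xi_1,\dots$ be i.i.d. samples, $c_k\in(0,1]$ and $\eta_k>0$ for $k\ge0$. Consider the projected SGDM iterates: $x_0\in C$, $z_0=x_0$, $z_{k+1}=\Pi_C(z_k-\eta_k\nabla f(x_k,\xi_k))$ for $k\ge 0$ and $x_k=(1-c_k)x_{k-1}+c_kz_k$ for $k\ge1$. Define, for $k\ge1$, $$A_k=\|z_k-x_*\|^2+\frac{2}{c_{k-1}}\eta_{k-1}\left[f(x_{k-1})-f(x_* )\right].$$ Suppose that $\left(\frac{1}{c_k}-1\right)\eta_k\le\frac{1}{c_{k-1}}\eta_{k-1}$ for all $k\ge2$ and $\left(\frac{1}{c_1}-1\right)\eta_1\le 0$. Then for every $k\ge1$, $$\mathbb{E}_{\xi_k}\left[A_{k+1}\right]\le A_k+\eta_k^2G^2,$$ where $\mathbb{E}_{\xi_k}$ denotes expectation with respect to $\xi_k$ conditional on $\xi_0,\dots,\xi_{k-1}$.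
   Context: $\Pi_C$ is the Euclidean projection onto $C$; $\nabla f(x,\xi)$ is a subgradient of $f(\cdot,\xi)$ at $x$. *)

From mathcomp Require Import all_boot all_order all_algebra.
From mathcomp Require Import all_classical all_reals all_analysis.
Set Implicit Arguments. Unset Strict Implicit. Unset Printing Implicit Defensive.
Import Order.TTheory GRing.Theory Num.Theory.
Import numFieldNormedType.Exports.
Local Open Scope classical_set_scope.
Local Open Scope ring_scope.

Section Defs.
Variables (R : realType) (d : nat).
Notation V := 'rV[R]_d.

Definition dotv (u v : V) : R := \sum_(i < d) u ord0 i * v ord0 i.
Definition enorm (u : V) : R := Num.sqrt (dotv u u).

Definition convex_fn (h : V -> R) : Prop :=
  forall x y t, 0 <= t <= 1 -> h (t *: x + (1 - t) *: y) <= t * h x + (1 - t) * h y.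

Definition is_proj (C : set V) (p : V -> V) : Prop :=
  forall y, C (p y) /\ (forall c, C c -> enorm (y - p y) <= enorm (y - c)).

Definition upd (T : Type) (s : nat -> T) (k : nat) (w : T) : nat -> T :=
  fun n => if n == k then w else s n.

Fixpoint sgdm (T : Type) (proj : V -> V) (g : V -> T -> V) (c eta : nat -> R)
    (x0 : V) (s : nat -> T) (k : nat) : V * V :=
  match k with
  | 0 => (x0, x0)
  | k'.+1 =>
      let zx := sgdm proj g c eta x0 s k' in
      let z' := proj (zx.1 - eta k' *: g zx.2 (s k')) in
      (z', (1 - c k) *: zx.2 + c k *: z')
  end.

Definition expect (dT : measure_display) (T : measurableType dT)
    (P : probability T R) (h : T -> R) : R :=
  fine (\int[P]_w (h w)%:E).

(* the potential A_k (for k >= 1) *)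
Definition Apot (T : Type) (proj : V -> V) (g : V -> T -> V) (c eta : nat -> R)
    (x0 : V) (F : V -> R) (xstar : V) (s : nat -> T) (k : nat) : R :=
  let z := (sgdm proj g c eta x0 s k).1 in
  let x := (sgdm proj g c eta x0 s k.-1).2 in
  enorm (z - xstar) ^+ 2 + 2 / c k.-1 * eta k.-1 * (F x - F xstar).

End Defs.

(* Fix ξ_0, ..., ξ_{k-1} and let g = ∇f(x_k, ξ_k).  Projection onto the convex
   set C does not increase distances to points of C, hence
     |z_{k+1} - x∗|^2 <= |z_k - x∗|^2 - 2 η_k <g, z_k - x∗> + η_k^2 |g|^2,
   and |g| <= G by the Lipschitz bound.  Since x_k lies on the segment
   [x_{k-1}, z_k], z_k - x∗ = (x_k - x∗) + (1/c_k - 1) (x_k - x_{k-1}), so the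
   subgradient inequalities at x_k towards x∗ and x_{k-1} give
     -<g, z_k - x∗> <= -(1/c_k) (f(x_k,ξ_k) - f(x∗,ξ_k))
                       + (1/c_k - 1) (f(x_{k-1},ξ_k) - f(x∗,ξ_k)).
   Integrating over ξ_k, the first term cancels the potential part of A_{k+1},
   and the step-size condition bounds the second by the potential part of A_k
   because f(x_{k-1}) >= f(x∗). *)

From mathcomp Require Import all_boot all_order all_algebra.
From mathcomp Require Import all_classical all_reals all_analysis.
From mathcomp Require Import ring lra.
Set Implicit Arguments. Unset Strict Implicit.
Import Order.TTheory GRing.Theory Num.Theory.
Import numFieldNormedType.Exports.
Local Open Scope classical_set_scope.
Local Open Scope ring_scope.

Section inner_product.
Variables (R : realType) (d : nat).
Local Notation V := 'rV[R]_d.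
Implicit Types u v w : V.

Lemma dotvC u v : dotv u v = dotv v u.
Proof. by apply: eq_bigr => i _; rewrite mulrC. Qed.

Lemma dotvDl u v w : dotv (u + v) w = dotv u w + dotv v w.
Proof. by rewrite /dotv -big_split; apply: eq_bigr => i _; rewrite !mxE mulrDl. Qed.

Lemma dotvZl a u v : dotv (a *: u) v = a * dotv u v.
Proof. by rewrite /dotv mulr_sumr; apply: eq_bigr => i _; rewrite !mxE mulrA. Qed.

Lemma dotvDr u v w : dotv w (u + v) = dotv w u + dotv w v.
Proof. by rewrite dotvC dotvDl !(dotvC w). Qed.

Lemma dotvZr a u v : dotv v (a *: u) = a * dotv v u.
Proof. by rewrite dotvC dotvZl dotvC. Qed.

Lemma dotvNr u v : dotv v (- u) = - dotv v u.
Proof. by rewrite -scaleN1r dotvZr mulN1r. Qed.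

Lemma dotvv_ge0 u : 0 <= dotv u u.
Proof. by apply: sumr_ge0 => i _; rewrite -expr2 sqr_ge0. Qed.

Lemma dotvDD u v : dotv (u + v) (u + v) = dotv u u + 2 * dotv u v + dotv v v.
Proof. by rewrite dotvDl !dotvDr (dotvC v u); ring. Qed.

Lemma enorm_ge0 u : 0 <= enorm u.
Proof. exact: sqrtr_ge0. Qed.

Lemma enorm_sqr u : enorm u ^+ 2 = dotv u u.
Proof. by rewrite sqr_sqrtr // dotvv_ge0. Qed.

Lemma ler_enorm u v : (enorm u <= enorm v) = (dotv u u <= dotv v v).
Proof. by rewrite -!enorm_sqr ler_pXn2r // nnegrE enorm_ge0. Qed.

End inner_product.

Section projection.
Variables (R : realType) (d : nat).
Local Notation V := 'rV[R]_d.
Variables (C : set V) (p : V -> V).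
Hypotheses (convC : convex_set C) (projC : is_proj C p).

Lemma convex_set_mem (a b : V) t : 0 <= t <= 1 -> C a -> C b ->
  C (t *: a + (1 - t) *: b).
Proof.
by case/andP=> t0 t1 Ca Cb; have := @convC a b (Itv01 t0 t1); rewrite !inE; apply.
Qed.

(* If the angle at [p y] were acute, moving from [p y] towards [c] by the
   step [t] below would get strictly closer to [y] inside [C]. *)
Lemma proj_obtuse y c : C c -> dotv (y - p y) (c - p y) <= 0.
Proof.
move=> Cc; have [Cq q_min] := projC y; set q := p y in Cq q_min *.
set a := dotv (y - q) (c - q); set b := dotv (c - q) (c - q).
rewrite leNgt; apply/negP => a_gt0.
have b_ge0 : 0 <= b by exact: dotvv_ge0.
have ab_gt0 : 0 < a + b by lra.
set t := a / (a + b).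
have tab : t * (a + b) = a by rewrite mulfVK // gt_eqF.
have t_gt0 : 0 < t by rewrite divr_gt0.
have t_le1 : t <= 1 by rewrite ler_pdivrMr // mul1r; lra.
have /q_min : C (t *: c + (1 - t) *: q).
  by apply: convex_set_mem => //; rewrite (ltW t_gt0).
have -> : y - (t *: c + (1 - t) *: q) = (y - q) + (- t) *: (c - q).
  by apply/rowP => i; rewrite !mxE; ring.
rewrite ler_enorm [in X in _ <= X]dotvDD !dotvZr !dotvZl -/a -/b => le_yq.
have : t * (2 * a - t * b) <= 0 by nra.
rewrite pmulr_rle0 // subr_le0 -(ler_pM2r ab_gt0) [t * b * _]mulrAC tab.
nra.
Qed.

Lemma proj_closer y c : C c -> dotv (p y - c) (p y - c) <= dotv (y - c) (y - c).
Proof.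
move=> Cc; have obtuse := proj_obtuse y Cc.
have -> : y - c = (y - p y) + (p y - c) by rewrite addrA subrK.
rewrite [in X in _ <= X]dotvDD.
have -> : dotv (y - p y) (p y - c) = - dotv (y - p y) (c - p y).
  by rewrite -dotvNr opprB.
have := dotvv_ge0 (y - p y); lra.
Qed.

End projection.

Section subgradient.
Variables (R : realType) (d : nat).
Local Notation V := 'rV[R]_d.
Variables (h : V -> R) (x gx : V).
Hypothesis subgrad : forall y, h x + dotv gx (y - x) <= h y.

Lemma subgrad_dotvv_le G : (forall y, `|h y - h x| <= G * enorm (y - x)) ->
  dotv gx gx <= G ^+ 2.
Proof.
move=> lip; have := subgrad (gx + x); have := lip (gx + x).
rewrite addrK -enorm_sqr; have := ler_norm (h (gx + x) - h x).
have := enorm_ge0 gx; nra.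
Qed.

Lemma proj_subgrad_step (C : set V) (p : V -> V) (z xp xs : V) (c eta : R) :
  convex_set C -> is_proj C p -> C xs ->
  0 < c <= 1 -> 0 <= eta -> x = (1 - c) *: xp + c *: z ->
  enorm (p (z - eta *: gx) - xs) ^+ 2 <=
  enorm (z - xs) ^+ 2 + eta ^+ 2 * dotv gx gx
  - 2 * eta / c * (h x - h xs) + 2 * eta * (c^-1 - 1) * (h xp - h xs).
Proof.
move=> convC projC Cxs /andP[c_gt0 c_le1] eta_ge0 x_def.
have := proj_closer convC projC (z - eta *: gx) Cxs.
have -> : z - eta *: gx - xs = (z - xs) + (- eta) *: gx.
  by apply/rowP => i; rewrite !mxE; ring.
rewrite -!enorm_sqr => /le_trans; apply.
rewrite !enorm_sqr dotvDD !dotvZr !dotvZl.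
have z_split : z - xs = (x - xs) + (c^-1 - 1) *: (x - xp).
  by rewrite x_def; apply/rowP => i; rewrite !mxE; field; rewrite gt_eqF.
have sub_xs := subgrad xs; have sub_xp := subgrad xp.
rewrite -[xs - x]opprB -[xp - x]opprB !dotvNr in sub_xs sub_xp.
have ci_sub1_ge0 : 0 <= c^-1 - 1 by rewrite subr_ge0 invf_ge1.
have momentum : (c^-1 - 1) * (h x - h xp) <= (c^-1 - 1) * dotv gx (x - xp).
  by apply: ler_wpM2l => //; lra.
have descent : c^-1 * (h x - h xs) - (c^-1 - 1) * (h xp - h xs) <= dotv (z - xs) gx.
  rewrite dotvC z_split dotvDr dotvZr; lra.
have := ler_wpM2l eta_ge0 descent; lra.
Qed.

End subgradient.

Section sgdm_iterates.
Variables (R : realType) (d : nat) (T : Type).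
Local Notation V := 'rV[R]_d.
Variables (proj : V -> V) (g : V -> T -> V) (c eta : nat -> R) (x0 : V).
Local Notation sgdm := (sgdm proj g c eta x0).

Lemma sgdm_upd s k w j : (j <= k)%N -> sgdm (upd s k w) j = sgdm s j.
Proof.
elim: j => [//|j IH] lt_jk /=.
by rewrite IH ?(ltnW lt_jk) // /upd (ltn_eqF lt_jk).
Qed.

Lemma sgdm_momentum s k : (0 < k)%N ->
  (sgdm s k).2 = (1 - c k) *: (sgdm s k.-1).2 + c k *: (sgdm s k).1.
Proof. by case: k. Qed.

Lemma sgdm_in (C : set V) : convex_set C -> is_proj C proj -> C x0 ->
  (forall k, 0 <= c k <= 1) -> forall s k, C (sgdm s k).1 /\ C (sgdm s k).2.
Proof.
move=> convC projC Cx0 c01 s; elim=> [//|k [_ Cx]] /=.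
set z := proj _; have [Cz _] := projC ((sgdm s k).1 - eta k *: g (sgdm s k).2 (s k)).
split=> //; rewrite [X in X *: z](_ : _ = 1 - (1 - c k.+1)); last by ring.
apply: convex_set_mem => //.
by have := c01 k.+1; rewrite subr_ge0 lerBlDr lerDl andbC.
Qed.

Lemma Apot_upd_succ F xs s k w :
  Apot proj g c eta x0 F xs (upd s k w) k.+1 =
  enorm (proj ((sgdm s k).1 - eta k *: g (sgdm s k).2 w) - xs) ^+ 2
  + 2 / c k * eta k * (F (sgdm s k).2 - F xs).
Proof. by rewrite /Apot /= !sgdm_upd // /upd eqxx. Qed.

Lemma Apot_upd_succ_le (C : set V) (h F : V -> R) xs G s k w :
  let z := (sgdm s k).1 in let x := (sgdm s k).2 in let xp := (sgdm s k.-1).2 in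
  convex_set C -> is_proj C proj -> C xs -> 0 < c k <= 1 -> 0 <= eta k ->
  (0 < k)%N -> (forall y, h x + dotv (g x w) (y - x) <= h y) ->
  (forall y, `|h y - h x| <= G * enorm (y - x)) ->
  Apot proj g c eta x0 F xs (upd s k w) k.+1 <=
  enorm (z - xs) ^+ 2 + eta k ^+ 2 * G ^+ 2 + 2 / c k * eta k * (F x - F xs)
  - 2 * eta k / c k * (h x - h xs) + 2 * eta k * ((c k)^-1 - 1) * (h xp - h xs).
Proof.
move=> z x xp convC projC Cxs ck01 etak_ge0 k_gt0 subgrad lip.
have := proj_subgrad_step subgrad convC projC Cxs ck01 etak_ge0
  (sgdm_momentum s k_gt0).
have := ler_wpM2l (sqr_ge0 (eta k)) (subgrad_dotvv_le subgrad lip).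
rewrite Apot_upd_succ -/z -/x -/xp; lra.
Qed.

End sgdm_iterates.

Section expectation.
Variables (R : realType) (dT : measure_display) (T : measurableType dT).

(* Monotonicity without measurability: the integral of a nonnegative function
   is the supremum of the integrals of the simple functions below it. *)
Lemma ge0_le_integralT (mu : {measure set T -> \bar R}) (h1 h2 : T -> \bar R) :
  (forall w, 0 <= h1 w)%E -> (forall w, h1 w <= h2 w)%E ->
  (\int[mu]_w h1 w <= \int[mu]_w h2 w)%E.
Proof.
move=> h1_ge0 h12; rewrite !ge0_integralE //; last first.
  by move=> w _; exact: le_trans (h1_ge0 w) (h12 w).
apply: ereal_sup_le => _ [u u_le <-]; exists u => //= w.
by apply: le_trans (u_le w) _; rewrite /patch; case: ifP.
Qed.

Variable P : probability T R.
Local Notation integrable h := (P.-integrable setT (fun w => (h w)%:E)).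

Lemma integral_expect (h : T -> R) : integrable h ->
  (\int[P]_w (h w)%:E = (expect P h)%:E)%E.
Proof. by move=> ih; rewrite /expect fineK // integrable_fin_num. Qed.

Lemma integrable_cst (a : R) : integrable (fun=> a).
Proof. exact: finite_measure_integrable_cst. Qed.

Lemma integrable_addZr (u h : T -> R) (a : R) : integrable u -> integrable h ->
  integrable (fun w => u w + a * h w).
Proof.
move=> iu ih; under eq_fun do rewrite EFinD EFinM.
exact: integrableD (integrableZl _ _ ih).
Qed.

Lemma expect_addZr (u h : T -> R) (a : R) : integrable u -> integrable h ->
  expect P (fun w => u w + a * h w) = expect P u + a * expect P h.
Proof.
move=> iu ih; apply: EFin_inj; rewrite -integral_expect ?integrable_addZr //.
under eq_integral do rewrite EFinD EFinM.
by rewrite integralD ?integrableZl // integralZl // !integral_expect.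
Qed.

Lemma expect_cst (a : R) : expect P (fun=> a) = a.
Proof.
have P_setT : (P : {measure set T -> \bar R}) setT = 1%E := probability_setT P.
by rewrite /expect integral_cst // P_setT mule1.
Qed.

End expectation.

Lemma step_size_cond_ge1 (R : realType) (c eta : nat -> R) :
  0 < c 0%N -> 0 < eta 0%N ->
  (forall k, (2 <= k)%N -> ((c k)^-1 - 1) * eta k <= (c k.-1)^-1 * eta k.-1) ->
  ((c 1%N)^-1 - 1) * eta 1%N <= 0 ->
  forall k, (0 < k)%N -> ((c k)^-1 - 1) * eta k <= (c k.-1)^-1 * eta k.-1.
Proof.
move=> c0_gt0 eta0_gt0 eta_step eta_step1 [//|[|k] _]; last exact: eta_step.
by apply: le_trans eta_step1 _; rewrite mulr_ge0 // ltW ?invr_gt0.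
Qed.

Theorem corollary16 (R : realType) (d : nat) (dT : measure_display)
  (T : measurableType dT) (P : probability T R)
  (C : set 'rV[R]_d) (proj : 'rV[R]_d -> 'rV[R]_d)
  (f : 'rV[R]_d -> T -> R) (g : 'rV[R]_d -> T -> 'rV[R]_d) (G : R)
  (xstar x0 : 'rV[R]_d) (c eta : nat -> R) :
  C !=set0 -> closed C -> convex_set C -> is_proj C proj ->
  (forall w, convex_fn (fun x => f x w)) ->
  (forall w x y, `|f x w - f y w| <= G * enorm (x - y)) ->
  (forall x, P.-integrable setT (fun w => (f x w)%:E)) ->
  (forall x w y, f x w + dotv (g x w) (y - x) <= f y w) ->
  (forall x i, measurable_fun setT (fun w => g x w ord0 i)) ->
  C xstar ->
  (forall x, C x -> expect P (f xstar) <= expect P (f x)) ->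
  C x0 ->
  (forall k, 0 < c k <= 1) -> (forall k, 0 < eta k) ->
  (forall k, (2 <= k)%N -> ((c k)^-1 - 1) * eta k <= (c k.-1)^-1 * eta k.-1) ->
  ((c 1%N)^-1 - 1) * eta 1%N <= 0 ->
  forall (s : nat -> T) (k : nat), (1 <= k)%N ->
    (\int[P]_w (Apot proj g c eta x0 (fun x => expect P (f x)) xstar
                   (upd s k w) k.+1)%:E
     <= (Apot proj g c eta x0 (fun x => expect P (f x)) xstar s k
         + eta k ^+ 2 * G ^+ 2)%:E)%E.
Proof.
move=> _ _ convC projC _ lip f_int subgrad _ Cxs xs_min Cx0 c01 eta_gt0
  eta_step eta_step1 s k k_ge1.
have /andP[c0_gt0 _] := c01 0%N.
have eta_cond := step_size_cond_ge1 c0_gt0 (eta_gt0 0%N) eta_step eta_step1 k_ge1.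
have c01w j : 0 <= c j <= 1 by have /andP[/ltW -> ->] := c01 j.
have /andP[ck_gt0 ck_le1] := c01 k; have etak_gt0 := eta_gt0 k.
set z := (sgdm proj g c eta x0 s k).1.
set x := (sgdm proj g c eta x0 s k).2.
set xp := (sgdm proj g c eta x0 s k.-1).2.
have [_ /xs_min Fx] := sgdm_in g eta convC projC Cx0 c01w s k.
have [_ /xs_min Fxp] := sgdm_in g eta convC projC Cx0 c01w s k.-1.
set K := enorm (z - xstar) ^+ 2 + eta k ^+ 2 * G ^+ 2
         + 2 / c k * eta k * (expect P (f x) - expect P (f xstar)).
pose r w : R := K + (- 2 * eta k / c k) * f x w + (2 * eta k) * f xstar w
            + (2 * eta k * ((c k)^-1 - 1)) * f xp w.
have intK := integrable_cst P K.
have int1 := integrable_addZr (- 2 * eta k / c k) intK (f_int x).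
have int2 := integrable_addZr (2 * eta k) int1 (f_int xstar).
have int_r := integrable_addZr (2 * eta k * ((c k)^-1 - 1)) int2 (f_int xp).
apply: (le_trans (ge0_le_integralT P (h2 := fun w => (r w)%:E) _ _)) => [w|w|].
- rewrite Apot_upd_succ lee_fin addr_ge0 ?sqr_ge0 // mulr_ge0 ?subr_ge0 //.
  by rewrite mulr_ge0 ?divr_ge0 // ltW.
- rewrite lee_fin; apply: le_trans (Apot_upd_succ_le (h := f ^~ w) _ convC projC
    Cxs (c01 k) (ltW etak_gt0) k_ge1 (subgrad x w) (lip w ^~ x)) _.
  rewrite /r /K; lra.
rewrite integral_expect // expect_addZr // expect_addZr // expect_addZr //
  expect_cst lee_fin /Apot /= -/z -/xp /K.
have gap_ge0 : 0 <= expect P (f xp) - expect P (f xstar) by rewrite subr_ge0.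
have := ler_wpM2r gap_ge0 eta_cond; lra.
Qed.
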